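(* If a finite group $G$ has a Sylow tower, then $\Gamma_s(G)=\Gamma_{Nc}(G)=\Gamma_H(G)$.
   Context: All groups are finite; $\pi(G)$ is the set of prime divisors of $|G|$. A group $G$ has a Sylow tower if there is an ordering $p_1,\dots,p_k$ of $\pi(G)$ and a normal series $1=G_0\le G_1\le\cdots\le G_k=G$ of $G$ such that each $G_i/G_{i-1}$ is isomorphic to a Sylow $p_i$-subgroup of $G$. Graphs are directed (vertex set plus set of ordered pairs). $O_{p',p}(G)$ is the largest normal $p$-nilpotent subgroup. The Hawkes graph $\Gamma_H(G)$ has vertex set $\pi(G)$ and edge $(p,q)$ iff $q\in\pi(G/O_{p',p}(G))$. The Sylow graph $\Gamma_s(G)$ has vertex set $\pi(G)$ and edge $(p,q)$ iff $q\in\pi(N_G(P)/PC_G(P))$ for some Sylow $p$-subgroup $P$. A Schmidt $(p,q)$-group is a non-nilpotent group all of whose proper subgroups are nilpotent, of order divisible exactly by the primes $p,q$, with a normal Sylow $p$-subgroup; $\Gamma_{Nc}(G)$ has vertex set $\pi(G)$ and edge $(p,q)$ iff $G$ has a Schmidt $(p,q)$-subgroup. *)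

From mathcomp Require Import all_boot all_fingroup all_solvable.
Set Implicit Arguments. Unset Strict Implicit. Unset Printing Implicit Defensive.
Local Open Scope group_scope.

Definition digraph := (pred nat * rel nat)%type.

Definition digraph_eq (g1 g2 : digraph) : Prop :=
  (forall p, g1.1 p = g2.1 p) /\ (forall p q, g1.2 p q = g2.2 p q).

Section Defs.
Variable gT : finGroupType.

(* G has a Sylow tower: an ordering s of pi(G) and a normal series
   1 = G_0 <= G_1 <= ... <= G_k = G (each G_i normal in G) with
   G_i / G_{i-1} isomorphic to a Sylow p_i-subgroup of G. *)
Definition has_sylow_tower (G : {group gT}) : Prop :=
  exists (s : seq nat) (Gs : seq {group gT}),
    [/\ perm_eq s (primes #|G|),
        size Gs = (size s).+1,
        ((nth 1%G Gs 0 :=: 1) /\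
        (nth 1%G Gs (size s) :=: G)),
        (forall i, i <= size s -> nth 1%G Gs i <| G) &
        (forall i, i < size s ->
           nth 1%G Gs i \subset nth 1%G Gs i.+1 /\
           exists2 P : {group gT}, P \in 'Syl_(nth 0 s i)(G) &
             (nth 1%G Gs i.+1 / nth 1%G Gs i) \isog P)].

Definition hawkes_graph (G : {group gT}) : digraph :=
  (fun p => p \in primes #|G|,
   fun p q => [&& p \in primes #|G|, q \in primes #|G|
                 & q \in primes #|G / 'O_{p^', p}(G)|]).

Definition sylow_graph (G : {group gT}) : digraph :=
  (fun p => p \in primes #|G|,
   fun p q => [&& p \in primes #|G|, q \in primes #|G|
     & [exists P : {group gT}, (P \in 'Syl_p(G)) &&
          (q \in primes #|'N_G(P) / (P * 'C_G(P))|)]]).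

Definition schmidt_pq (p q : nat) (H : {group gT}) : bool :=
  [&& ~~ nilpotent H,
      [forall K : {group gT}, (K \proper H) ==> nilpotent K],
      [&& p \in primes #|H|, q \in primes #|H|
        & all (fun r => (r == p) || (r == q)) (primes #|H|)]
    & [exists P : {group gT}, (P \in 'Syl_p(H)) && (P <| H)]].

Definition schmidt_graph (G : {group gT}) : digraph :=
  (fun p => p \in primes #|G|,
   fun p q => [&& p \in primes #|G|, q \in primes #|G|
     & [exists H : {group gT}, (H \subset G) && schmidt_pq p q H]]).

End Defs.

(* The edge relations are compared along the cycle Sylow -> Schmidt -> Hawkes -> Sylow;
   only the last step uses the Sylow tower.
   Sylow -> Schmidt: a q-element x of N_G(P) outside P C_G(P) does not centralise P, so
   P<x> is a non-nilpotent {p,q}-group with a normal Sylow p-subgroup, and a minimal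
   non-nilpotent subgroup of P<x> is a Schmidt (p,q)-group.
   Schmidt -> Hawkes: if q does not divide |G : O_{p',p}(G)|, a Sylow q-subgroup Q of a
   Schmidt (p,q)-subgroup H lies in O_{p'}(G), so Q = H :&: O_{p'}(G) is normal in H and
   H = P Q would be nilpotent.
   Hawkes -> Sylow: the tower yields a normal p'-subgroup M with M P normal, whence
   P <= O_{p',p}(G).  By Schur-Zassenhaus C_G(P) = Z(P) O_{p'}(C_G(P)), and
   M O_{p'}(C_G(P)) is normalised by G = M P N_G(P), so C_G(P) <= O_{p',p}(G) as well.
   The Frattini argument G = O_{p',p}(G) N_G(P) then makes G / O_{p',p}(G) a quotient
   of N_G(P) / P C_G(P). *)

From mathcomp Require Import all_boot all_fingroup all_solvable.
Set Implicit Arguments. Unset Strict Implicit. Unset Printing Implicit Defensive.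
Local Open Scope group_scope.

Section GeneralFacts.
Variable gT : finGroupType.
Implicit Types (pi : nat_pred) (G H K N Q : {group gT}).

Lemma pgroup_sub_p'quotient pi G N Q :
  N <| G -> Q \subset G -> pi.-group Q -> pi^'.-group (G / N) -> Q \subset N.
Proof.
move=> nsNG sQG piQ pi'GN; have nNQ := subset_trans sQG (normal_norm nsNG).
rewrite -(quotient_sub1 nNQ) subG1 trivg_card1.
by rewrite (pnat_1 (quotient_pgroup N piQ) (pgroupS (quotientS N sQG) pi'GN)).
Qed.

Lemma central_Hall_p'core pi G H :
  pi.-Hall(G) H -> G \subset 'C(H) -> H * 'O_pi^'(G) = G.
Proof.
move=> hallH cHG; have sHG := pHall_sub hallH.
have nsHG : H <| G by rewrite /normal sHG (subset_trans cHG (cent_sub H)).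
have [K complK] := splitsP (SchurZassenhaus_split (pHall_Hall hallH) nsHG).
have hallK : pi^'.-Hall(G) K by rewrite -(compl_pHall _ hallH).
have [_ defG] := complP complK; have sKG := pHall_sub hallK.
have nsKG : K <| G.
  rewrite /normal sKG -{1}defG mulG_subG normG andbT.
  by rewrite cents_norm // centsC (subset_trans sKG cHG).
by rewrite (normal_Hall_pcore hallK nsKG).
Qed.

Lemma nilpotent_mul_coprime H K :
  H \subset 'N(K) -> K \subset 'N(H) -> coprime #|H| #|K| ->
  nilpotent H -> nilpotent K -> nilpotent (H * K).
Proof.
move=> nKH nHK coHK nilH nilK; rewrite mulg_nil ?nilH //.
apply/commG1P/trivgP; rewrite -(coprime_TIg coHK) setIC.
by rewrite commg_subI // subsetI subxx.
Qed.

End GeneralFacts.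

Lemma p'core_sub_pseries (gT : finGroupType) (p : nat) (G : {group gT}) :
  'O_p^'(G) \subset 'O_{p^', p}(G).
Proof. by have := pseries_sub_catl [:: p^'] [:: (p : nat_pred)] G; rewrite pseries1. Qed.

Section NormalP'Extension.
Variables (gT : finGroupType) (p : nat) (G M P : {group gT}).
Hypotheses (nsMG : M <| G) (p'M : p^'.-group M).
Hypotheses (sylP : p.-Sylow(G) P) (nsMPG : M <*> P <| G).

Let sPG : P \subset G := pHall_sub sylP.
Let nMP : P \subset 'N(M) := subset_trans sPG (normal_norm nsMG).
Let defG : (M <*> P) * 'N_G(P) = G.
Proof.
exact: Frattini_arg nsMPG (pHall_subl (joing_subr M P) (normal_sub nsMPG) sylP).
Qed.

Lemma joing_Sylow_sub_pseries : M <*> P \subset 'O_{p^', p}(G).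
Proof.
have nO'G : G \subset 'N('O_p^'(G)) := normal_norm (pcore_normal _ _).
have sMO' : M \subset 'O_p^'(G) := pcore_max p'M nsMG.
rewrite -(quotientSGK (subset_trans (normal_sub nsMPG) nO'G) (p'core_sub_pseries p G)).
rewrite quotient_pseries2 pcore_max ?quotient_normal //.
rewrite /= norm_joinEr // quotientMl ?(subset_trans sMO') // quotientS1 // mul1g.
exact: quotient_pgroup (pHall_pgroup sylP).
Qed.

Lemma pseries_mul_normaliser : 'O_{p^', p}(G) * 'N_G(P) = G.
Proof.
apply/eqP; rewrite eqEsubset mulG_subG pseries_sub subsetIl /=.
by rewrite -{1}defG mulSg ?joing_Sylow_sub_pseries.
Qed.

Lemma cent_Sylow_sub_pseries : 'C_G(P) \subset 'O_{p^', p}(G).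
Proof.
pose K := 'O_p^'('C_G(P)).
have sCN : 'C_G(P) \subset 'N_G(P) by rewrite setIS ?cent_sub.
have sPN : P \subset 'N_G(P) by rewrite subsetI sPG normG.
have hallPC : p.-Hall('C_G(P)) (P :&: 'C_G(P)).
  exact: setI_normal_Hall (normalSG sPG) (pHall_subl sPN (subsetIl _ _) sylP) sCN.
have cPC : 'C_G(P) \subset 'C(P :&: 'C_G(P)).
  by rewrite (subset_trans (subsetIr G _)) ?centS ?subsetIl.
have sKC : K \subset 'C_G(P) := pcore_sub _ _.
have cPK : P \subset 'C(K) by rewrite centsC (subset_trans sKC) ?subsetIr.
have nKN : 'N_G(P) \subset 'N(K) := char_norm_trans (pcore_char _ _) (subcent_norm G P).
have nMN : 'N_G(P) \subset 'N(M) := subset_trans (subsetIl _ _) (normal_norm nsMG).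
have nMK : K \subset 'N(M) := subset_trans sKC (subset_trans sCN nMN).
have sMK_O' : M <*> K \subset 'O_p^'(G).
  apply: pcore_max; first by rewrite /= norm_joinEr ?pgroupM ?p'M ?pcore_pgroup.
  rewrite /normal join_subG (normal_sub nsMG) (subset_trans sKC (subsetIl _ _)) /=.
  rewrite -defG mulG_subG join_subG (subset_trans (joing_subl M K)) ?normG //=.
  by rewrite (normsY nMP (cents_norm cPK)) normsY.
rewrite -(central_Hall_p'core hallPC cPC) mulG_subG.
rewrite (subset_trans (subsetIl _ _) (subset_trans (joing_subr M P) joing_Sylow_sub_pseries)).
exact: subset_trans (joing_subr M K) (subset_trans sMK_O' (p'core_sub_pseries p G)).
Qed.

Lemma primes_quotient_pseries_sub q :
  q \in primes #|G / 'O_{p^', p}(G)| -> q \in primes #|'N_G(P) / (P * 'C_G(P))|.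
Proof.
have nPC : 'C_G(P) \subset 'N(P) by rewrite (subset_trans (subsetIr _ _)) ?cent_sub.
have sPCN : P <*> 'C_G(P) \subset 'N_G(P).
  by rewrite join_subG subsetI sPG normG setIS ?cent_sub.
have nPCN : 'N_G(P) \subset 'N(P <*> 'C_G(P)) := normsY (subsetIr _ _) (subcent_norm G P).
rewrite -norm_joinEr // !mem_primes !card_quotient ?(normal_norm (pseries_normal _ _)) //.
case/and3P=> -> _ q_dvd; rewrite indexg_gt0; apply: dvdn_trans q_dvd _.
rewrite -{1}pseries_mul_normaliser indexMg -indexgI indexgS // subsetI sPCN join_subG.
by rewrite cent_Sylow_sub_pseries (subset_trans (joing_subr M P) joing_Sylow_sub_pseries).
Qed.

End NormalP'Extension.

Section SylowTower.
Variables (gT : finGroupType) (p : nat) (G : {group gT}).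

Lemma Sylow_factor_p'extension (M L P0 : {group gT}) :
    M <| G -> L <| G -> M \subset L -> p.-Sylow(G) P0 -> L / M \isog P0 ->
  p^'.-group M /\ exists2 P : {group gT}, p.-Sylow(G) P & M <*> P :=: L.
Proof.
move=> nsMG nsLG sML sylP0 isoLM; have sLG := normal_sub nsLG.
have nML : L \subset 'N(M) := subset_trans sLG (normal_norm nsMG).
have cardL : #|L| = (#|M| * #|G|`_p)%N.
  by rewrite -(card_Hall sylP0) -(card_isog isoLM) card_quotient // Lagrange.
have p'M : p^'.-group M.
  have : (#|M| * #|G|`_p)%N %| #|G|`_p^' * #|G|`_p by rewrite -cardL mulnC partnC ?cardSg.
  by rewrite dvdn_pmul2r ?part_gt0 // => /pnat_dvd; apply; apply: part_pnat.
have [P sylP] := Sylow_exists p L; have [sPL pP _] := and3P sylP.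
have cardP : #|P| = (#|G|`_p)%N.
  by rewrite (card_Hall sylP) cardL partnM // part_p'nat // mul1n part_pnat_id ?part_pnat.
split=> //; exists P; first by rewrite pHallE cardP eqxx (subset_trans sPL).
apply/eqP; rewrite eqEcard join_subG sML sPL /= norm_joinEr ?(subset_trans sPL) //.
by rewrite TI_cardMg ?cardL ?cardP // coprime_TIg // (pnat_coprime p'M) ?pnatNK.
Qed.

Lemma sylow_tower_p'extension : has_sylow_tower G -> p \in primes #|G| ->
  exists M P : {group gT}, [/\ M <| G, p^'.-group M, p.-Sylow(G) P & M <*> P <| G].
Proof.
move=> [s [Gs [perm_s _ _ nsGsG tower]]] p_G.
have s_p : p \in s by rewrite (perm_mem perm_s).
have i_lt : index p s < size s by rewrite index_mem.
have [sGsi [P0 sylP0 isoP0]] := tower _ i_lt; rewrite nth_index // inE in sylP0.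
have [p'M [P sylP defL]] :=
  Sylow_factor_p'extension (nsGsG _ (ltnW i_lt)) (nsGsG _ i_lt) sGsi sylP0 isoP0.
by exists (nth 1%G Gs (index p s)), P; rewrite defL !nsGsG // ltnW.
Qed.

End SylowTower.

Section Schmidt.
Variables (gT : finGroupType) (p q : nat).
Implicit Types G H P X : {group gT}.

Lemma schmidt_pq_pgroup H : schmidt_pq p q H -> (pred2 p q).-group H.
Proof. by case/and4P=> _ _ /and3P[_ _ piH] _; rewrite /pgroup /pnat cardG_gt0. Qed.

Lemma pred2_nonnilpotent_primes X :
  (pred2 p q).-group X -> ~~ nilpotent X -> (p \in \pi(X)) && (q \in \pi(X)).
Proof.
move=> piX nnilX; apply/andP; split; apply: contraR nnilX => r'X.
  apply: (pgroup_nil (p := q)); apply: sub_in_pnat piX => r r_X.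
  by rewrite !inE; case/orP=> /eqP r_eq //; rewrite -r_eq r_X in r'X.
apply: (pgroup_nil (p := p)); apply: sub_in_pnat piX => r r_X.
by rewrite !inE; case/orP=> /eqP r_eq //; rewrite -r_eq r_X in r'X.
Qed.

Lemma schmidt_pq_subgroup X P :
    ~~ nilpotent X -> (pred2 p q).-group X -> p.-Sylow(X) P -> P <| X ->
  exists2 H : {group gT}, H \subset X & schmidt_pq p q H.
Proof.
move=> nnilX piX sylP nsPX.
have : exists H : {group gT}, ~~ nilpotent H && (H \subset X) by exists X; rewrite nnilX subxx.
case/ex_mingroup=> H /mingroupP[/andP[nnilH sHX] minH]; exists H => //.
have piH := pgroupS sHX piX.
apply/and4P; split=> //.
- apply/forallP=> K; apply/implyP=> ltKH; apply/idPn=> nnilK.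
  have sKH := proper_sub ltKH.
  by rewrite (minH K) ?properxx // in ltKH; rewrite nnilK (subset_trans sKH).
- case/andP: (pred2_nonnilpotent_primes piH nnilH) => -> ->.
  by case/andP: piH.
apply/existsP; exists (P :&: H)%G; rewrite inE (setI_normal_Hall nsPX sylP sHX) /=.
by rewrite setIC (normalGI sHX nsPX).
Qed.

Lemma quotient_p_elt_notin (N D : {group gT}) : N \subset 'N(D) -> q \in primes #|N / D| ->
  exists2 x, x \in N & q.-elt x && (x \notin D).
Proof.
move=> nDN q_ND; have [Q sylQ] := Sylow_exists q N; have [sQN qQ _] := and3P sylQ.
have /subsetPn[x Qx D'x] : ~~ (Q \subset D).
  apply: contraL q_ND => sQD.
  have := card_Hall (quotient_pHall (subset_trans sQN nDN) sylQ).
  by rewrite /= (quotientS1 sQD) cards1 => /esym/eqP; rewrite p_part_eq1.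
by exists x; rewrite ?(subsetP sQN) // D'x andbT (mem_p_elt qQ).
Qed.

Lemma Sylow_normaliser_schmidt_pq G P :
    p.-Sylow(G) P -> q \in primes #|'N_G(P) / (P * 'C_G(P))| ->
  exists2 H : {group gT}, H \subset G & schmidt_pq p q H.
Proof.
move=> sylP q_NPC; have sPG := pHall_sub sylP.
have sPN : P \subset 'N_G(P) by rewrite subsetI sPG normG.
have nPC : 'C_G(P) \subset 'N(P) by rewrite (subset_trans (subsetIr _ _)) ?cent_sub.
have nPCN : 'N_G(P) \subset 'N(P <*> 'C_G(P)) := normsY (subsetIr _ _) (subcent_norm G P).
rewrite -norm_joinEr // in q_NPC.
have [x Nx /andP[qx PC'x]] := quotient_p_elt_notin nPCN q_NPC.
have [Gx nPx] := setIP Nx.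
have C'x : x \notin 'C(P).
  apply: contra PC'x => cPx; have CGx : x \in 'C_G(P) by rewrite inE Gx.
  exact: subsetP (joing_subr P 'C_G(P)) x CGx.
have neq_qp : q != p.
  apply: contra PC'x => /eqP eq_qp; have sylPN := pHall_subl sPN (subsetIl _ _) sylP.
  have Px : x \in P by rewrite (mem_normal_Hall sylPN (normalSG sPG) Nx) -eq_qp.
  exact: subsetP (joing_subl P 'C_G(P)) x Px.
have nPx' : <[x]> \subset 'N(P) by rewrite cycle_subG.
have sXG : P <*> <[x]> \subset G by rewrite join_subG sPG cycle_subG.
have [H sHX schH] : exists2 H : {group gT}, H \subset P <*> <[x]> & schmidt_pq p q H.
  apply: (schmidt_pq_subgroup (P := P)).
  - apply: contra C'x => nilX; rewrite -cycle_subG.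
    apply: sub_nilpotent_cent2 nilX (joing_subl _ _) (joing_subr _ _) _.
    by apply: (sub_pnat_coprime _ (pHall_pgroup sylP) qx) => r; rewrite !inE => /eqP->.
  - rewrite /= norm_joinEr // pgroupM; apply/andP; split.
      by apply: pi_pgroup (pHall_pgroup sylP) _; rewrite inE eqxx.
    by apply: pi_pgroup qx _; rewrite inE eqxx orbT.
  - exact: pHall_subl (joing_subl _ _) sXG sylP.
  by rewrite /normal joing_subl join_subG normG nPx'.
by exists H; rewrite ?(subset_trans sHX sXG).
Qed.

Lemma schmidt_pq_primes_quotient_pseries G H :
  H \subset G -> schmidt_pq p q H -> q \in primes #|G / 'O_{p^', p}(G)|.
Proof.
move=> sHG schH; have piH := schmidt_pq_pgroup schH.
case/and4P: schH => nnilH _ /and3P[_ qH _] /existsP[P /andP[sylP nsPH]].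
rewrite inE in sylP; have pr_q : prime q by move: qH; rewrite mem_primes => /andP[].
apply: contraNT nnilH => q'GO.
have [eq_pq | neq_pq] := eqVneq p q.
  by apply: (pgroup_nil (p := p)); apply: sub_in_pnat piH => r _; rewrite !inE -eq_pq orbb.
have p'q_H : {in \pi(H), p^' =i (q : nat_pred)}.
  move=> r /(pnatPpi piH); rewrite !inE => /orP[] /eqP->; last by rewrite eqxx eq_sym.
  by rewrite eqxx (negPf neq_pq).
have [Q sylQ] := Sylow_exists q H; have [sQH qQ _] := and3P sylQ.
have hallQ : p^'.-Hall(H) Q by rewrite (eq_in_pHall _ p'q_H).
have p'Q := pHall_pgroup hallQ.
have sQO : Q \subset 'O_{p^', p}(G).
  apply: pgroup_sub_p'quotient (pseries_normal _ _) (subset_trans sQH sHG) qQ _.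
  by rewrite /pgroup p'natE //; rewrite mem_primes pr_q cardG_gt0 in q'GO.
have sQO' : Q \subset 'O_p^'(G).
  apply: (pgroup_sub_p'quotient (pi := p^')) _ sQO p'Q _.
    exact: normalS (p'core_sub_pseries p G) (pseries_sub _ _) (pcore_normal _ _).
  by rewrite /pgroup pnatNK quotient_pseries2; apply: pcore_pgroup.
have nsQH : Q <| H.
  have p'HO' := pgroupS (subsetIr H _) (pcore_pgroup p^' G).
  have sQHO' : Q \subset H :&: 'O_p^'(G) by rewrite subsetI sQH.
  rewrite -(sub_pHall hallQ p'HO' sQHO' (subsetIl _ _)).
  exact: normalGI sHG (pcore_normal _ _).
have /complP[_ <-] : Q \in [complements to P in H] by rewrite (compl_pHall _ sylP).
rewrite nilpotent_mul_coprime ?(pgroup_nil qQ) ?(pgroup_nil (pHall_pgroup sylP)) //.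
- exact: subset_trans (pHall_sub sylP) (normal_norm nsQH).
- exact: subset_trans sQH (normal_norm nsPH).
exact: pnat_coprime (pHall_pgroup sylP) p'Q.
Qed.

End Schmidt.

Theorem lemma4 (gT : finGroupType) (G : {group gT}) :
  has_sylow_tower G ->
  digraph_eq (sylow_graph G) (schmidt_graph G) /\
  digraph_eq (schmidt_graph G) (hawkes_graph G).
Proof.
move=> towerG.
have sylow_schmidt p q : (sylow_graph G).2 p q -> (schmidt_graph G).2 p q.
  case/and3P=> /= -> -> /existsP[P /andP[]]; rewrite inE => sylP.
  case/(Sylow_normaliser_schmidt_pq sylP)=> H sHG schH.
  by apply/existsP; exists H; rewrite sHG.
have schmidt_hawkes p q : (schmidt_graph G).2 p q -> (hawkes_graph G).2 p q.
  case/and3P=> /= -> -> /existsP[H /andP[sHG schH]].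
  exact: schmidt_pq_primes_quotient_pseries sHG schH.
have hawkes_sylow p q : (hawkes_graph G).2 p q -> (sylow_graph G).2 p q.
  case/and3P=> /= p_G -> q_GO; rewrite p_G /=.
  have [M [P [nsMG p'M sylP nsMPG]]] := sylow_tower_p'extension towerG p_G.
  apply/existsP; exists P; rewrite inE sylP /=.
  exact: (primes_quotient_pseries_sub nsMG p'M sylP nsMPG).
split; split=> // p q; apply/idP/idP.
- exact: sylow_schmidt.
- by move/schmidt_hawkes/hawkes_sylow.
- exact: schmidt_hawkes.
by move/hawkes_sylow/sylow_schmidt.
Qed.
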